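(* In the perishable-goods model described in the context, let $\hat v_1,\hat v_2,\dots$ and $K^*$ be defined as in the context, as functions of the parameters $(c,\lambda,\mu)$. Then for each $k\in\{2,\dots,K^*\}$, the threshold $\hat v_k$ is strictly increasing in $c$, strictly increasing in $\lambda$, and strictly decreasing in $\mu$. The threshold $\hat v_1$ (when $K^*\ge1$) is strictly increasing in $c$, strictly decreasing in $\mu$, and independent of $\lambda$.
   Context: Goods arrive by a Poisson process with rate $\mu>0$, buyers by an independent Poisson process with rate $\lambda>0$, buyer values are i.i.d. from $F$ on $[0,1]$ with density $f>0$, $f$ absolutely continuous, and $J(v)=v-\frac{1-F(v)}{f(v)}$ strictly increasing with $J(0)<0$; $c>0$ is the buyers' per-unit-time waiting cost. Let $\rho(v):=\lambda[1-F(v)]/\mu$. The thresholds (which are the admission thresholds of the revenue-optimal policy, under which a buyer ranked $k$-th in the queue is kept iff his value is at least $\hat v_k$) are defined recursively: $\hat v_1=J^{-1}(c/\mu)$ if $c/\mu<1$ and $\hat v_1=1$ otherwise; for $k\ge2$, if $\hat v_{k-1}<1$ and $\mu\int_{\hat v_{k-1}}^{1}\frac{J'(v)}{1+\rho(v)+\dots+\rho(v)^{k-1}}dv\ge c$, then $\hat v_k$ is the unique $x\in(\hat v_{k-1},1]$ with $\mu\int_{\hat v_{k-1}}^{x}\frac{J'(v)}{1+\rho(v)+\dots+\rho(v)^{k-1}}dv=c$; otherwise $\hat v_k=1$. $K^*$ is the number of indices $k$ with $\hat v_k<1$. Monotonicity in a parameter is understood while the other two parameters are held fixed and on parameter values for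 which the relevant index $k$ satisfies $k\le K^*$. *)

From HB Require Import structures.
From mathcomp Require Import all_boot all_order all_algebra.
From mathcomp Require Import all_classical all_reals all_analysis.
Set Implicit Arguments. Unset Strict Implicit. Unset Printing Implicit Defensive.
Import Order.TTheory GRing.Theory Num.Theory.
Local Open Scope classical_set_scope.
Local Open Scope ring_scope.

Definition abs_cont_on (R : realType) (a b : R) (g : R -> R) : Prop :=
  forall e : R, 0 < e -> exists2 d : R, 0 < d &
    forall (n : nat) (u w : 'I_n -> R),
      (forall i, a <= u i /\ u i <= w i /\ w i <= b) ->
      (forall i j, i != j -> w i <= u j \/ w j <= u i) ->
      \sum_(i < n) (w i - u i) < d ->
      \sum_(i < n) `|g (w i) - g (u i)| < e.

Definition Jfun (R : realType) (F f : R -> R) (v : R) : R :=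
  v - (1 - F v) / f v.

Definition rho (R : realType) (F : R -> R) (lam mu : R) (v : R) : R :=
  lam * (1 - F v) / mu.

Definition Jinv (R : realType) (F f : R -> R) (y : R) : R :=
  xget 0 [set x | 0 <= x <= 1 /\ Jfun F f x = y].

Definition thr_int (R : realType) (F f : R -> R) (lam mu : R) (k : nat)
    (a x : R) : \bar R :=
  (mu%:E * \int[lebesgue_measure]_(v in `[a, x])
      ((derive1 (Jfun F f) v) / (\sum_(i < k) (rho F lam mu v) ^+ i))%:E)%E.

Definition vstep (R : realType) (F f : R -> R) (c lam mu : R) (k : nat)
    (prev : R) : R :=
  if (prev < 1) && (c%:E <= thr_int F f lam mu k prev 1)%E
  then xget 1 [set x | prev < x <= 1 /\ thr_int F f lam mu k prev x = c%:E]
  else 1.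

(* thresholds vhat_k, k >= 1 (index 0 is unused) *)
Fixpoint vhat (R : realType) (F f : R -> R) (c lam mu : R) (k : nat) : R :=
  match k with
  | O => 0
  | S O => if c / mu < 1 then Jinv F f (c / mu) else 1
  | S k' => vstep F f c lam mu k (vhat F f c lam mu k')
  end.

Definition Kstar (R : realType) (F f : R -> R) (c lam mu : R) : nat :=
  (\sum_(k \in [set k : nat | (0 < k)%N /\ (vhat F f c lam mu k < 1)%R]) 1)%N.

From HB Require Import structures.
From mathcomp Require Import all_boot all_order all_algebra.
From mathcomp Require Import all_classical all_reals all_analysis.
From mathcomp Require Import measurable_realfun lra.
Set Implicit Arguments. Unset Strict Implicit. Unset Printing Implicit Defensive.
Import Order.TTheory GRing.Theory Num.Theory.
Import numFieldNormedType.Exports.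
Local Open Scope classical_set_scope.
Local Open Scope ring_scope.

(* For k >= 2 the threshold v_k is pinned down by
   mu * \int_{v_(k-1)}^{v_k} J'(v) / (1 + rho v + ... + rho v ^ (k-1)) dv = c,
   with a nonnegative integrand. By induction on k, v_(k-1) moves in the claimed
   direction; if v_k moved the other way, the interval of integration for one
   parameter value would lie inside the one for the other, and comparing the two
   equations contradicts the change of parameter: a larger c needs a larger
   integral; a larger mu enlarges the integrand but shrinks the target c / mu; a
   larger lambda enlarges rho by a margin bounded away from 0 on [0, v_k] (as
   F v_k < 1), so the integrand shrinks by a uniform factor > 1. The first
   threshold J^-1(c / mu) does not involve lambda and moves with c / mu since J
   is increasing. *)

(* No measurability is assumed: the integrand below involves [derive1 (Jfun F f)],
   for which none is available. *)
Section ge0_integral_without_measurability.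
Context d (T : measurableType d) (R : realType) (mu : {measure set T -> \bar R}).
Local Open Scope ereal_scope.

Lemma ge0_le_integral_scale (D1 D2 : set T) (g1 g2 : T -> \bar R) (th : R) :
  (0 < th)%R -> D2 `<=` D1 ->
  (forall x, D1 x -> 0 <= g1 x) -> (forall x, D2 x -> 0 <= g2 x) ->
  (forall x, D2 x -> th%:E * g2 x <= g1 x) ->
  th%:E * \int[mu]_(x in D2) g2 x <= \int[mu]_(x in D1) g1 x.
Proof.
move=> th0 D21 g10 g20 le_g.
rewrite (ge0_integralE mu g20) (ge0_integralE mu g10) -ereal_sup_pZl//.
apply: ge_ereal_sup => _ [_ [h /= h_le <-] <-].
apply: ereal_sup_ubound => /=; exists (scale_nnsfun h (ltW th0)); last first.
  by rewrite sintegralrM.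
move=> x /=; rewrite EFinM.
apply: (@le_trans _ _ (th%:E * (g2 \_ D2) x)).
  by apply: lee_wpmul2l => //; rewrite lee_fin ltW.
rewrite /patch; case: ifPn => [|_].
  by rewrite in_setE => D2x; rewrite ifT ?in_setE; [exact: le_g | exact: D21].
by rewrite mule0; case: ifPn => //; rewrite in_setE => /g10.
Qed.

Lemma ge0_le_integral_subset (D1 D2 : set T) (g1 g2 : T -> \bar R) :
  D2 `<=` D1 ->
  (forall x, D1 x -> 0 <= g1 x) -> (forall x, D2 x -> 0 <= g2 x) ->
  (forall x, D2 x -> g2 x <= g1 x) ->
  \int[mu]_(x in D2) g2 x <= \int[mu]_(x in D1) g1 x.
Proof.
move=> D21 g10 g20 le_g; rewrite -[leLHS]mul1e.
by apply: ge0_le_integral_scale => // x D2x; rewrite mul1e; exact: le_g.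
Qed.

End ge0_integral_without_measurability.

Lemma pmule_eq_EFin (R : realFieldType) (m c : R) (x : \bar R) : 0 < m ->
  (m%:E * x = c%:E)%E -> x = (c / m)%:E.
Proof.
move=> m0; case: x => [r| |] /=.
- move=> mr; have <- : m * r = c by apply: EFin_inj; rewrite EFinM.
  by rewrite [m * r]mulrC mulfK // gt_eqF.
- by rewrite gt0_muley ?lte_fin.
- by rewrite gt0_muleNy ?lte_fin.
Qed.

Lemma abs_cont_on_continuous (R : realType) (a b : R) (g : R -> R) :
  abs_cont_on a b g -> {within `[a, b], continuous g}.
Proof.
move=> g_ac; apply/subspace_continuousP => x abx; apply/cvgrPdist_lt => e e0.
have [d d0 g_d] := g_ac _ e0.
have g_close u w : a <= u -> u <= w -> w <= b -> w - u < d -> `|g w - g u| < e.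
  move=> au uw wb wud; have := g_d 1%N (fun _ => u) (fun _ => w).
  by rewrite !big_ord1; apply => // i j; rewrite !ord1 eqxx.
rewrite near_withinE; apply/nbhs_ballP; exists d => //= t xt abt.
move: abx abt xt; rewrite /= /ball /= !in_itv /= => /andP[ax xb] /andP[ta tb].
have [xt'|tx] := leP x t.
  by rewrite distrC ger0_norm ?subr_ge0 // => ?; rewrite distrC; apply: g_close.
by rewrite ger0_norm ?subr_ge0 ?ltW // => ?; apply: g_close => //; rewrite ltW.
Qed.

(* No differentiability is needed: where the difference quotients do not converge,
   [derive1] is the default value [0]. *)
Lemma nondecreasing_derive1_ge0 (R : realType) (g : R -> R) (a b v : R) :
  a < b -> (forall x y, a <= x -> x <= y -> y <= b -> g x <= g y) ->
  a <= v <= b -> 0 <= derive1 g v.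
Proof.
move=> ab g_le /andP[av vb]; rewrite /derive1 /lim /lim_in.
case: xgetP => [l _ gl | _] //.
have [vb'|bv] := ltP v b.
- have sub : (0:R)^'+ `=>` (0:R)^'.
    move=> P [e /= e0 eP]; exists e => // h /eP Ph h0; apply: Ph.
    by rewrite gt_eqF.
  apply: (cvgr_to_ge (cvg_trans (cvg_app _ sub) gl)).
  have bv0 : 0 < b - v by rewrite subr_gt0.
  near=> h.
  have h0 : 0 < h by near: h; exact: nbhs_right_gt.
  have hb : h < b - v by near: h; exact: nbhs_right_lt.
  apply: mulr_ge0; first by rewrite invr_ge0 ltW.
  rewrite subr_ge0; apply: g_le => //; first by rewrite lerDr ltW.
  by rewrite -lerBrDr ltW.
- have vb_eq : v = b by apply/eqP; rewrite eq_le vb bv.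
  have sub : (0:R)^'- `=>` (0:R)^'.
    move=> P [e /= e0 eP]; exists e => // h /eP Ph h0; apply: Ph.
    by rewrite lt_eqF.
  apply: (cvgr_to_ge (cvg_trans (cvg_app _ sub) gl)).
  have ab0 : a - b < 0 by rewrite subr_lt0.
  near=> h.
  have h0 : h < 0 by near: h; exact: nbhs_left_lt.
  have ah : a - b < h by near: h; exact: nbhs_left_gt.
  apply: mulr_le0; first by rewrite invr_le0 ltW.
  rewrite subr_le0; apply: g_le => //; last by rewrite gerDr ltW.
  by rewrite vb_eq -lerBlDr ltW.
Unshelve. all: by end_near.
Qed.

Section geometric_sums.
Variable R : realFieldType.

Lemma geom_sum_ge1 (r : R) k : 0 <= r -> (0 < k)%N -> 1 <= \sum_(i < k) r ^+ i.
Proof.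
move=> r0; case: k => // k _; rewrite big_ord_recl expr0 lerDl.
by apply: sumr_ge0 => i _; exact: exprn_ge0.
Qed.

Lemma ler_geom_sum (r s : R) k : 0 <= r -> r <= s ->
  \sum_(i < k) r ^+ i <= \sum_(i < k) s ^+ i.
Proof.
move=> r0 rs; apply: ler_sum => i _.
by apply: lerXn2r => //; rewrite nnegrE // (le_trans r0 rs).
Qed.

Lemma geom_sum_gap (r s q e : R) k : (1 < k)%N -> 0 <= r <= q -> 0 <= e ->
  r + e <= s ->
  (1 + e / \sum_(i < k) q ^+ i) * \sum_(i < k) r ^+ i <= \sum_(i < k) s ^+ i.
Proof.
move=> k1 /andP[r0 rq] e0 res.
have rs : r <= s by apply: le_trans res; rewrite lerDl.
have Sq_gt0 : 0 < \sum_(i < k) q ^+ i.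
  exact: lt_le_trans ltr01 (geom_sum_ge1 (le_trans r0 rq) (ltnW k1)).
have gap : \sum_(i < k) r ^+ i + e <= \sum_(i < k) s ^+ i.
  have : s - r <= \sum_(i < k) (s ^+ i - r ^+ i).
    rewrite (bigD1 (Ordinal k1)) //= !expr1 lerDl; apply: sumr_ge0 => i _.
    by rewrite subr_ge0 lerXn2r // nnegrE // (le_trans r0 rs).
  rewrite sumrB; lra.
apply: le_trans gap; rewrite mulrDl mul1r lerD2l mulrAC ler_pdivrMr //.
by apply: ler_wpM2l => //; exact: ler_geom_sum.
Qed.

End geometric_sums.

Lemma threshold_lt_ind (R : numDomainType) (V W : nat -> R) :
  (forall j, V j.+2 < 1 -> V j.+1 < 1) -> (forall j, W j.+2 < 1 -> W j.+1 < 1) ->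
  (V 1 < 1 -> W 1 < 1 -> V 1 <= W 1) ->
  (forall j, V j.+2 < 1 -> W j.+2 < 1 -> V j.+1 <= W j.+1 -> V j.+2 < W j.+2) ->
  forall j, V j.+2 < 1 -> W j.+2 < 1 -> V j.+2 < W j.+2.
Proof.
move=> V_down W_down base step; elim=> [|j IH] Vj Wj; apply: step => //.
  by apply: base; [exact: V_down Vj | exact: W_down Wj].
by apply: ltW; apply: IH; [exact: V_down Vj | exact: W_down Wj].
Qed.

Section thresholds.
Variables (R : realType) (F f : R -> R) (c lam mu : R).
Local Notation V := (vhat F f c lam mu).

Lemma vhat1 : V 1 = if c / mu < 1 then Jinv F f (c / mu) else 1.
Proof. by []. Qed.

Lemma vhatSS j : V j.+2 = vstep F f c lam mu j.+2 (V j.+1).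
Proof. by []. Qed.

Lemma vhat_bounds k : 0 <= V k <= 1.
Proof.
have vstep_bounds j p : 0 <= p -> 0 <= vstep F f c lam mu j p <= 1.
  move=> p0; rewrite /vstep; case: ifP => _; last by rewrite ler01 lexx.
  case: xgetP => [x _ [/andP[px x1] _]|_]; last by rewrite ler01 lexx.
  by rewrite x1 (le_trans p0 (ltW px)).
elim: k => [|[|k] IH]; first by rewrite /= lexx ler01.
  rewrite vhat1; case: ifP => _; last by rewrite ler01 lexx.
  by rewrite /Jinv; case: xgetP => [x _ []|_]; rewrite ?lexx ?ler01.
by rewrite vhatSS; apply: vstep_bounds; case/andP: IH.
Qed.

Lemma vhat1_lt1 : V 1 < 1 -> c / mu < 1 /\ V 1 = Jinv F f (c / mu).
Proof. by rewrite vhat1; case: ifP => //; rewrite ltxx. Qed.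

Lemma vhatSS_lt1 j : V j.+2 < 1 ->
  [/\ V j.+1 < 1, V j.+1 < V j.+2 &
      thr_int F f lam mu j.+2 (V j.+1) (V j.+2) = c%:E].
Proof.
rewrite vhatSS /vstep; case: ifP => [/andP[p1 _]|]; last by rewrite ltxx.
by case: xgetP => [x _ [/andP[px x1] thr]|_]; [|rewrite ltxx].
Qed.

Lemma vhat_lt1_le i k : (0 < i)%N -> (i <= k)%N -> V k < 1 -> V i < 1.
Proof.
move=> i0 /subnK <-; case: i i0 => // i _; elim: (k - i.+1)%N => // n IH.
rewrite addSn addnS => /vhatSS_lt1[lt1 _ _]; apply: IH.
by rewrite addnS.
Qed.

Lemma vhat_lt1_of_le_Kstar k : (0 < k)%N -> (k <= Kstar F f c lam mu)%N ->
  V k < 1.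
Proof.
move=> k0 kK; rewrite ltNge; apply/negP => Vk; move: kK; apply/negP.
rewrite -ltnNge /Kstar fsbig_mkcond -(fsbig_widen `I_k setT); last 2 first.
- by [].
- move=> i [_ /= ik]; rewrite /patch; case: ifPn => //.
  rewrite in_setE => -[i0 Vi]; have ki : (k <= i)%N by rewrite leqNgt; apply/negP.
  by move: Vk; rewrite leNgt (vhat_lt1_le k0 ki Vi).
rewrite -(@fsbig_ord _ 0%N addn k); case: k k0 Vk => // k _ _.
rewrite big_ord_recl /patch ifF; last by apply/negbTE; rewrite notin_setE => -[].
rewrite /= Monoid.simpm ltnS.
apply: (@leq_trans (\sum_(i < k) 1)%N); last by rewrite sum1_card card_ord.
by apply: leq_sum => i _; case: ifP.
Qed.

End thresholds.

Section model.
Variables (R : realType) (F f : R -> R).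
Hypothesis f_gt0 : forall v, 0 <= v <= 1 -> 0 < f v.
Hypothesis f_ac : abs_cont_on 0 1 f.
Hypothesis FE : forall v, 0 <= v <= 1 ->
  (F v)%:E = (\int[lebesgue_measure]_(t in `[0%R, v]) (f t)%:E)%E.
Hypothesis F1 : F 1 = 1.
Hypothesis J_ltr : forall x y, 0 <= x -> x < y -> y <= 1 -> Jfun F f x < Jfun F f y.
Hypothesis J0_lt0 : Jfun F f 0 < 0.

Lemma f_cont : {within `[0, 1], continuous f}.
Proof. exact: abs_cont_on_continuous. Qed.

Lemma f_meas : measurable_fun (`[0%R, 1%R]%classic : set R) f.
Proof. exact: subspace_continuous_measurable_fun f_cont. Qed.

Lemma F_ge0 v : 0 <= v <= 1 -> 0 <= F v.
Proof.
move=> /andP[v0 v1]; rewrite -lee_fin FE ?v0 ?v1 //; apply: integral_ge0.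
move=> t; rewrite /= in_itv /= => /andP[t0 tv].
by rewrite lee_fin ltW // f_gt0 // t0 (le_trans tv v1).
Qed.

Lemma F_le u w : 0 <= u -> u <= w -> w <= 1 -> F u <= F w.
Proof.
move=> u0 uw w1; have w0 := le_trans u0 uw.
rewrite -lee_fin FE ?u0 ?(le_trans uw w1) // FE ?w0 ?w1 //.
apply: ge0_le_integral_subset.
- by move=> t; rewrite /= !in_itv /= => /andP[-> tu]; rewrite (le_trans tu uw).
- move=> t; rewrite /= in_itv /= => /andP[t0 tw].
  by rewrite lee_fin ltW // f_gt0 // t0 (le_trans tw w1).
- move=> t; rewrite /= in_itv /= => /andP[t0 tu].
  by rewrite lee_fin ltW // f_gt0 // t0 (le_trans tu (le_trans uw w1)).
- by [].
Qed.

Lemma F_le1 v : 0 <= v <= 1 -> F v <= 1.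
Proof. by move=> /andP[v0 v1]; rewrite -F1; apply: F_le. Qed.

Lemma F_lt1 x : 0 <= x -> x < 1 -> F x < 1.
Proof.
move=> x0 x1.
have [m m01 f_min] := EVT_min ler01 f_cont.
have m0 : 0 < f m by apply: f_gt0; move: m01; rewrite in_itv.
have split01 : `[0%R, 1%R]%classic = `[0%R, x] `|` `]x, 1%R] :> set R.
  apply/seteqP; split => y /=; rewrite !in_itv /=.
    by move=> /andP[y0 y1]; case: (leP y x) => yx; [left|right]; rewrite ?y0 ?yx ?y1.
  case=> /andP[y0 y1]; rewrite ?y0 ?(le_trans y1 (ltW x1)) //.
  by rewrite (le_trans x0 (ltW y0)) y1.
have disj : [disjoint `[0%R, x]%classic & `]x, 1%R]].
  apply/disj_setPS => y [/=]; rewrite !in_itv /= => /andP[_ yx] /andP[xy _].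
  by move: (lt_le_trans xy yx); rewrite ltxx.
have len : lebesgue_measure (`]x, 1%R]%classic : set R) = (1 - x)%:E.
  by have := lebesgue_measure_itv `]x, 1%R]; rewrite /= lte_fin x1 -EFinD; apply.
have tail : ((f m * (1 - x))%:E <=
             \int[lebesgue_measure]_(t in `]x, 1%R]) (f t)%:E)%E.
  have one_int : (\int[lebesgue_measure]_(t in `]x, 1%R]) (cst 1%E t) = (1 - x)%:E)%E.
    by rewrite integral_cst ?mul1e ?len //; exact: measurable_itv.
  rewrite EFinM -one_int; apply: ge0_le_integral_scale => //.
  - move=> t; rewrite /= in_itv /= => /andP[xt t1].
    by rewrite lee_fin ltW // f_gt0 // t1 (le_trans x0 (ltW xt)).
  - move=> t; rewrite /= in_itv /= => /andP[xt t1].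
    by rewrite mule1 lee_fin f_min // in_itv /= t1 (le_trans x0 (ltW xt)).
have := FE (v := 1); rewrite F1 ler01 lexx => /(_ isT).
rewrite split01 ge0_integral_setU //; first last.
- by rewrite -split01 => y; rewrite /= in_itv /= => y01; rewrite lee_fin ltW // f_gt0.
- by rewrite -split01; apply/measurable_EFinP; exact: f_meas.
rewrite -FE ?x0 ?(ltW x1) // => F1E.
have : ((F x)%:E + (f m * (1 - x))%:E <= 1%:E)%E by rewrite F1E leeD2l.
rewrite -EFinD lee_fin; apply: lt_le_trans.
by rewrite ltrDl mulr_gt0 // subr_gt0.
Qed.

Lemma F_cont : {within `[0, 1], continuous F}.
Proof.
have f_int : lebesgue_measure.-integrable `[0%R, 1%R] (EFin \o f).
  apply/integrableP; split; first by apply/measurable_EFinP; exact: f_meas.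
  under eq_integral.
    move=> y; rewrite inE /= in_itv /= => y01.
    rewrite /= gtr0_norm; last by rewrite f_gt0.
    over.
  by rewrite /= -FE ?ler01 ?lexx // ltry.
apply: subspace_eq_continuous (parameterized_integral_continuous ler01 f_int).
move=> v; rewrite inE /= => v01.
by rewrite /from_subspace /= /parameterized_integral /Rintegral -FE.
Qed.

Lemma J_cont : {within `[0, 1], continuous (Jfun F f)}.
Proof.
apply: (@subspace_eq_continuous _ _ _ (fun v => v - (1 - F v) / f v)) => //.
apply/subspace_continuousP => x x01.
have cF := iffLR (subspace_continuousP _ _) F_cont x x01.
have cf := iffLR (subspace_continuousP _ _) f_cont x x01.
have fx0 : f x != 0 by rewrite gt_eqF // f_gt0 //; move: x01; rewrite /= in_itv.
apply: cvgB; first exact: cvg_within.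
apply: cvgM; first by apply: cvgB => //; exact: cvg_cst.
exact: cvgV.
Qed.

Lemma J_le x y : 0 <= x -> x <= y -> y <= 1 -> Jfun F f x <= Jfun F f y.
Proof.
move=> x0; rewrite le_eqVlt => /orP[/eqP -> //|xy] y1.
exact/ltW/J_ltr.
Qed.

Lemma Jinv_spec y : 0 < y <= 1 ->
  0 <= Jinv F f y <= 1 /\ Jfun F f (Jinv F f y) = y.
Proof.
move=> /andP[y0 y1].
suff : [set x | 0 <= x <= 1 /\ Jfun F f x = y] (Jinv F f y) by [].
rewrite /Jinv; apply: xgetPex.
have J1 : Jfun F f 1 = 1 by rewrite /Jfun F1 subrr mul0r subr0.
have [|x x01 Jx] := IVT ler01 J_cont (v := y).
  rewrite J1; apply/andP; split; first by rewrite ge_min (ltW (lt_trans J0_lt0 y0)).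
  by rewrite le_max y1 orbT.
by exists x; split => //; move: x01; rewrite in_itv.
Qed.

Lemma Jinv_ltr y1 y2 : 0 < y1 -> y1 < y2 -> y2 <= 1 -> Jinv F f y1 < Jinv F f y2.
Proof.
move=> y10 y12 y21.
have [|/andP[a0 a1] Ja] := Jinv_spec (y := y1).
  by rewrite y10 (ltW (lt_le_trans y12 y21)).
have [|/andP[b0 b1] Jb] := Jinv_spec (y := y2).
  by rewrite (lt_trans y10 y12) y21.
rewrite ltNge; apply/negP => ba.
by move: (J_le b0 ba a1); rewrite Ja Jb leNgt y12.
Qed.

Lemma dJ_ge0 v : 0 <= v <= 1 -> 0 <= derive1 (Jfun F f) v.
Proof. exact: nondecreasing_derive1_ge0 ltr01 J_le. Qed.

Lemma rho_ge0 lam mu v : 0 <= lam -> 0 < mu -> 0 <= v <= 1 -> 0 <= rho F lam mu v.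
Proof.
move=> lam0 mu0 v01; rewrite /rho mulr_ge0 ?invr_ge0 ?(ltW mu0) // mulr_ge0 //.
by rewrite subr_ge0 F_le1.
Qed.

Definition thr_integrand lam mu k v : R :=
  derive1 (Jfun F f) v / \sum_(i < k) (rho F lam mu v) ^+ i.

Lemma thr_integrand_ge0 lam mu k v : 0 <= lam -> 0 < mu -> (0 < k)%N ->
  0 <= v <= 1 -> 0 <= thr_integrand lam mu k v.
Proof.
move=> lam0 mu0 k0 v01; rewrite divr_ge0 ?dJ_ge0 //.
exact: le_trans ler01 (geom_sum_ge1 (rho_ge0 lam0 mu0 v01) k0).
Qed.

Lemma thr_integrand_le_mu lam mu1 mu2 k v : 0 <= lam -> 0 < mu1 -> mu1 <= mu2 ->
  (0 < k)%N -> 0 <= v <= 1 ->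
  thr_integrand lam mu1 k v <= thr_integrand lam mu2 k v.
Proof.
move=> lam0 mu10 mu12 k0 v01; have mu20 := lt_le_trans mu10 mu12.
have sum_gt0 mu : 0 < mu -> 0 < \sum_(i < k) (rho F lam mu v) ^+ i.
  by move=> mu0; exact: lt_le_trans ltr01 (geom_sum_ge1 (rho_ge0 lam0 mu0 v01) k0).
rewrite /thr_integrand ler_wpM2l ?dJ_ge0 // lef_pV2 ?posrE ?sum_gt0 //.
apply: ler_geom_sum; first exact: rho_ge0.
rewrite /rho ler_wpM2l ?lef_pV2 ?posrE //.
by rewrite mulr_ge0 // subr_ge0 F_le1.
Qed.

Lemma thr_integrand_lam_gap lam1 lam2 mu k x : 0 <= lam1 -> lam1 < lam2 ->
  0 < mu -> (1 < k)%N -> 0 <= x -> x < 1 ->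
  exists2 th, 1 < th & forall v, 0 <= v <= x ->
    th * thr_integrand lam2 mu k v <= thr_integrand lam1 mu k v.
Proof.
move=> lam10 lam12 mu0 k1 x0 x1; have k0 := ltnW k1.
set eta := (lam2 - lam1) * (1 - F x) / mu.
have eta0 : 0 < eta by rewrite /eta !mulr_gt0 ?invr_gt0 ?subr_gt0 ?F_lt1.
set Q := \sum_(i < k) (lam1 / mu) ^+ i.
have Q_gt0 : 0 < Q.
  by apply: lt_le_trans ltr01 (geom_sum_ge1 _ k0); rewrite divr_ge0 // ltW.
exists (1 + eta / Q); first by rewrite ltrDl divr_gt0.
move=> v /andP[v0 vx]; have v01 : 0 <= v <= 1 by rewrite v0 (le_trans vx (ltW x1)).
set r1 := rho F lam1 mu v; set r2 := rho F lam2 mu v.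
have r10 : 0 <= r1 by exact: rho_ge0.
have r1_le : r1 <= lam1 / mu.
  rewrite /r1 /rho ler_wpM2r ?invr_ge0 ?(ltW mu0) // ler_piMr //.
  by rewrite lerBlDr lerDl F_ge0.
have r12 : r1 + eta <= r2.
  have : 0 <= (lam2 - lam1) * mu^-1 * (F x - F v).
    by rewrite !mulr_ge0 ?subr_ge0 ?invr_ge0 ?F_le // ?ltW.
  rewrite /r1 /r2 /eta /rho; nra.
have P1_gt0 : 0 < \sum_(i < k) r1 ^+ i := lt_le_trans ltr01 (geom_sum_ge1 r10 k0).
have P2_gt0 : 0 < \sum_(i < k) r2 ^+ i.
  apply: lt_le_trans ltr01 (geom_sum_ge1 _ k0).
  by apply: le_trans r12; rewrite addr_ge0 // ltW.
have gap := geom_sum_gap k1 (introT andP (conj r10 r1_le)) (ltW eta0) r12.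
rewrite /thr_integrand -/r1 -/r2 mulrCA; apply: ler_wpM2l; first exact: dJ_ge0.
rewrite -(ler_pM2r P1_gt0) mulVf ?gt_eqF // mulrAC ler_pdivrMr // mul1r.
exact: gap.
Qed.

Lemma vhatSS_scale_le j (cA lamA muA cB lamB muB th : R) :
  0 <= lamA -> 0 < muA -> 0 <= lamB -> 0 < muB -> 0 < th ->
  vhat F f cA lamA muA j.+2 < 1 -> vhat F f cB lamB muB j.+2 < 1 ->
  vhat F f cA lamA muA j.+1 <= vhat F f cB lamB muB j.+1 ->
  vhat F f cB lamB muB j.+2 <= vhat F f cA lamA muA j.+2 ->
  (forall v, 0 <= v <= vhat F f cB lamB muB j.+2 ->
     th * thr_integrand lamB muB j.+2 v <= thr_integrand lamA muA j.+2 v) ->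
  th * (cB / muB) <= cA / muA.
Proof.
move=> lamA0 muA0 lamB0 muB0 th0 xA1 xB1 aAB xBA le_ig.
have [_ _] := vhatSS_lt1 xA1; rewrite /thr_int => /(pmule_eq_EFin muA0) intA.
have [_ _] := vhatSS_lt1 xB1; rewrite /thr_int => /(pmule_eq_EFin muB0) intB.
have /andP[aA0 _] := vhat_bounds F f cA lamA muA j.+1.
have /andP[aB0 _] := vhat_bounds F f cB lamB muB j.+1.
have ig_ge0 lam mu a x : 0 <= lam -> 0 < mu -> 0 <= a -> x <= 1 ->
    forall v, `[a, x]%classic v -> (0 <= (thr_integrand lam mu j.+2 v)%:E)%E.
  move=> lam0 mu0 a0 x1 v; rewrite /= in_itv /= => /andP[av vx].
  by rewrite lee_fin thr_integrand_ge0 // (le_trans a0 av) (le_trans vx x1).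
rewrite -lee_fin EFinM -intA -intB; apply: ge0_le_integral_scale => //.
- move=> v /=; rewrite !in_itv /= => /andP[av vx].
  by rewrite (le_trans aAB av) (le_trans vx xBA).
- exact: ig_ge0 lamA0 muA0 aA0 (ltW xA1).
- exact: ig_ge0 lamB0 muB0 aB0 (ltW xB1).
- move=> v /=; rewrite in_itv /= => /andP[av vx].
  by rewrite -EFinM lee_fin le_ig // vx (le_trans aB0 av).
Qed.

Lemma vhat_lt_c k c1 c2 lam mu : (0 < k)%N -> 0 < c1 -> c1 < c2 -> 0 < lam ->
  0 < mu -> (k <= Kstar F f c1 lam mu)%N -> (k <= Kstar F f c2 lam mu)%N ->
  vhat F f c1 lam mu k < vhat F f c2 lam mu k.
Proof.
move=> k0 c10 c12 lam0 mu0.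
move=> /(vhat_lt1_of_le_Kstar k0) V1 /(vhat_lt1_of_le_Kstar k0) V2.
have base : vhat F f c1 lam mu 1 < 1 -> vhat F f c2 lam mu 1 < 1 ->
    vhat F f c1 lam mu 1 < vhat F f c2 lam mu 1.
  move=> /vhat1_lt1[_ ->] /vhat1_lt1[c2mu ->].
  by apply: Jinv_ltr; rewrite ?divr_gt0 ?ltr_pM2r ?invr_gt0 // ltW.
case: k k0 V1 V2 => [//|[_|j _ V1 V2]]; first exact: base.
apply: (threshold_lt_ind (V := vhat F f c1 lam mu) (W := vhat F f c2 lam mu)
          _ _ _ _ V1 V2).
- by move=> i /vhatSS_lt1[].
- by move=> i /vhatSS_lt1[].
- by move=> A1 B1; exact/ltW/base.
- move=> i A1 B1 le1; rewrite ltNge; apply/negP => le2.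
  have : 1 * (c2 / mu) <= c1 / mu.
    apply: (vhatSS_scale_le (ltW lam0) mu0 (ltW lam0) mu0 ltr01 A1 B1 le1 le2).
    by move=> v _; rewrite mul1r.
  by rewrite mul1r ler_pM2r ?invr_gt0 // leNgt c12.
Qed.

Lemma vhat_lt_mu k c lam mu1 mu2 : (0 < k)%N -> 0 < c -> 0 < lam -> 0 < mu1 ->
  mu1 < mu2 -> (k <= Kstar F f c lam mu1)%N -> (k <= Kstar F f c lam mu2)%N ->
  vhat F f c lam mu2 k < vhat F f c lam mu1 k.
Proof.
move=> k0 c0 lam0 mu10 mu12.
move=> /(vhat_lt1_of_le_Kstar k0) V1 /(vhat_lt1_of_le_Kstar k0) V2.
have mu20 := lt_trans mu10 mu12.
have cmu : c / mu2 < c / mu1 by rewrite ltr_pM2l // ltf_pV2.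
have base : vhat F f c lam mu2 1 < 1 -> vhat F f c lam mu1 1 < 1 ->
    vhat F f c lam mu2 1 < vhat F f c lam mu1 1.
  move=> /vhat1_lt1[_ ->] /vhat1_lt1[cmu1 ->].
  by apply: Jinv_ltr; rewrite ?divr_gt0 // ltW.
case: k k0 V2 V1 => [//|[_|j _ V2 V1]]; first exact: base.
apply: (threshold_lt_ind (V := vhat F f c lam mu2) (W := vhat F f c lam mu1)
          _ _ _ _ V2 V1).
- by move=> i /vhatSS_lt1[].
- by move=> i /vhatSS_lt1[].
- by move=> A1 B1; exact/ltW/base.
- move=> i A1 B1 le1; rewrite ltNge; apply/negP => le2.
  have : 1 * (c / mu1) <= c / mu2.
    apply: (vhatSS_scale_le (ltW lam0) mu20 (ltW lam0) mu10 ltr01 A1 B1 le1 le2).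
    move=> v /andP[v0 vB]; rewrite mul1r thr_integrand_le_mu ?(ltW mu12) ?(ltW lam0) //.
    by rewrite v0 (le_trans vB (ltW B1)).
  by rewrite mul1r leNgt cmu.
Qed.

Lemma vhat_lt_lam k c lam1 lam2 mu : (1 < k)%N -> 0 < c -> 0 < lam1 ->
  lam1 < lam2 -> 0 < mu ->
  (k <= Kstar F f c lam1 mu)%N -> (k <= Kstar F f c lam2 mu)%N ->
  vhat F f c lam1 mu k < vhat F f c lam2 mu k.
Proof.
move=> k1 c0 lam10 lam12 mu0; have k0 := ltnW k1.
move=> /(vhat_lt1_of_le_Kstar k0) V1 /(vhat_lt1_of_le_Kstar k0) V2.
have lam20 := lt_trans lam10 lam12.
case: k k1 k0 V1 V2 => [|[|j]] // _ _ V1 V2.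
apply: (threshold_lt_ind (V := vhat F f c lam1 mu) (W := vhat F f c lam2 mu)
          _ _ _ _ V1 V2).
- by move=> i /vhatSS_lt1[].
- by move=> i /vhatSS_lt1[].
- by move=> _ _; rewrite /= lexx.
- move=> i A1 B1 le1; rewrite ltNge; apply/negP => le2.
  have /andP[B0 _] := vhat_bounds F f c lam2 mu i.+2.
  have [th th1 le_ig] := thr_integrand_lam_gap (k := i.+2) (ltW lam10) lam12 mu0 isT B0 B1.
  have := vhatSS_scale_le (ltW lam10) mu0 (ltW lam20) mu0 (lt_trans ltr01 th1)
    A1 B1 le1 le2 le_ig.
  by rewrite ger_pMl ?divr_gt0 // leNgt th1.
Qed.

End model.

Theorem proposition1 (R : realType) (F f : R -> R)
  (hf_pos : forall v, 0 <= v <= 1 -> 0 < f v)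
  (hf_ac : abs_cont_on 0 1 f)
  (hF : forall v, 0 <= v <= 1 ->
          (F v)%:E = (\int[lebesgue_measure]_(t in `[0%R, v]) (f t)%:E)%E)
  (hF1 : F 1 = 1)
  (hJ_incr : forall x y, 0 <= x -> x < y -> y <= 1 -> Jfun F f x < Jfun F f y)
  (hJ0 : Jfun F f 0 < 0) :
  (forall k : nat, (2 <= k)%N ->
     (forall c1 c2 lam mu, 0 < c1 -> c1 < c2 -> 0 < lam -> 0 < mu ->
        (k <= Kstar F f c1 lam mu)%N -> (k <= Kstar F f c2 lam mu)%N ->
        vhat F f c1 lam mu k < vhat F f c2 lam mu k)
  /\ (forall c lam1 lam2 mu, 0 < c -> 0 < lam1 -> lam1 < lam2 -> 0 < mu ->
        (k <= Kstar F f c lam1 mu)%N -> (k <= Kstar F f c lam2 mu)%N ->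
        vhat F f c lam1 mu k < vhat F f c lam2 mu k)
  /\ (forall c lam mu1 mu2, 0 < c -> 0 < lam -> 0 < mu1 -> mu1 < mu2 ->
        (k <= Kstar F f c lam mu1)%N -> (k <= Kstar F f c lam mu2)%N ->
        vhat F f c lam mu2 k < vhat F f c lam mu1 k))
  /\
  ((forall c1 c2 lam mu, 0 < c1 -> c1 < c2 -> 0 < lam -> 0 < mu ->
        (1 <= Kstar F f c1 lam mu)%N -> (1 <= Kstar F f c2 lam mu)%N ->
        vhat F f c1 lam mu 1 < vhat F f c2 lam mu 1)
  /\ (forall c lam mu1 mu2, 0 < c -> 0 < lam -> 0 < mu1 -> mu1 < mu2 ->
        (1 <= Kstar F f c lam mu1)%N -> (1 <= Kstar F f c lam mu2)%N ->
        vhat F f c lam mu2 1 < vhat F f c lam mu1 1)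
  /\ (forall c lam1 lam2 mu, 0 < c -> 0 < lam1 -> 0 < lam2 -> 0 < mu ->
        (1 <= Kstar F f c lam1 mu)%N -> (1 <= Kstar F f c lam2 mu)%N ->
        vhat F f c lam1 mu 1 = vhat F f c lam2 mu 1)).
Proof.
split.
  move=> k k2; have k0 : (0 < k)%N := ltnW k2.
  split; [|split] => *; [exact: vhat_lt_c | exact: vhat_lt_lam | exact: vhat_lt_mu].
split; [|split] => *; [exact: vhat_lt_c | exact: vhat_lt_mu | by []].
Qed.
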